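(* Let $n\ge1$ and let $A$ be a set equipped with an $(n+1)$-ary operation $\theta$, binary operations $\alpha_1,\dots,\alpha_n$ and an element $e\in A$ such that for all $a,b\in A$: $$\alpha_i(a,a)=e\ (1\le i\le n),\qquad \theta(\alpha_1(a,b),\dots,\alpha_n(a,b),b)=a,$$ and such that $\theta$ is 2-associative, i.e. for all $a_1,\dots,a_n,b_1,\dots,b_n,c\in A$, $$\theta(a_1,\dots,a_n,\theta(b_1,\dots,b_n,c))=\theta(\theta(a_1,\dots,a_n,b_1),\dots,\theta(a_1,\dots,a_n,b_n),c).$$ Then $A$ with the binary operation $ab=\theta(a,a,\dots,a,b)$ is a group, and for every $b\in A$, $$b^{-1}=\theta\big(\alpha_1(e,\theta(b,b,\dots,b)),\alpha_2(e,\theta(b,b,\dots,b)),\dots,\alpha_n(e,\theta(b,b,\dots,b)),b\big).$$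
   Context: Here $\theta(b,b,\dots,b)$ denotes $\theta$ applied to $n+1$ copies of $b$, and $\theta(a,a,\dots,a,b)$ denotes $\theta$ with $a$ in the first $n$ arguments and $b$ in the last. *)

From mathcomp Require Import all_boot.
Set Implicit Arguments. Unset Strict Implicit. Unset Printing Implicit Defensive.

(* An (n+1)-ary operation theta on A is represented as
   theta : ('I_n -> A) -> A -> A, where theta a b = θ(a_0,...,a_{n-1}, b). *)

Definition is_identity (A : Type) (mul : A -> A -> A) (u : A) : Prop :=
  forall a, mul u a = a /\ mul a u = a.

Definition is_group (A : Type) (mul : A -> A -> A) : Prop :=
  (forall a b c, mul a (mul b c) = mul (mul a b) c) /\
  exists u, is_identity mul u /\
    forall a, exists x, mul a x = u /\ mul x a = u.

Definition is_inverse (A : Type) (mul : A -> A -> A) (b x : A) : Prop :=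
  forall u, is_identity mul u -> mul b x = u /\ mul x b = u.

From mathcomp Require Import all_boot.
From Stdlib Require Import FunctionalExtensionality.

Set Implicit Arguments.
Unset Strict Implicit.
Unset Printing Implicit Defensive.

(* With ab := theta(a,...,a,b), 2-associativity makes the product associative,
   alpha_i(a,a) = e makes e a left identity, and theta(alpha(e,b), e) is a left
   inverse of b, since theta(a, c) = theta(a, e) c.  A semigroup with a left
   identity and left inverses is a group, and theta(alpha(e, bb), b) is
   (bb)^-1 b = b^-1. *)

Section LeftGroup.

Variables (A : Type) (mul : A -> A -> A) (e : A) (inv : A -> A).
Hypothesis mulA : forall a b c, mul a (mul b c) = mul (mul a b) c.
Hypothesis mul1x : forall a, mul e a = a.
Hypothesis mulVx : forall a, mul (inv a) a = e.

Lemma left_inverse_is_right_inverse b x : mul x b = e -> mul b x = e.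
Proof.
move=> xb_e.
by rewrite -(mul1x (mul b x)) -{1}(mulVx x) -mulA (mulA x b x) xb_e mul1x mulVx.
Qed.

Lemma mulx1 a : mul a e = a.
Proof.
by rewrite -(mulVx a) mulA (left_inverse_is_right_inverse (mulVx a)) mul1x.
Qed.

Lemma identity_unique u : is_identity mul u -> u = e.
Proof. by move=> /(_ e) [<- _]; rewrite mulx1. Qed.

Lemma left_group_is_group : is_group mul.
Proof.
split=> //; exists e; split=> [a | a]; first by rewrite mul1x mulx1.
by exists (inv a); rewrite mulVx (left_inverse_is_right_inverse (mulVx a)).
Qed.

Lemma left_inverse_is_inverse b x : mul x b = e -> is_inverse mul b x.
Proof.
by move=> xb_e u /identity_unique ->; rewrite xb_e left_inverse_is_right_inverse.
Qed.

End LeftGroup.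

Definition diag_mul (n : nat) (A : Type) (theta : ('I_n -> A) -> A -> A) (a b : A) :=
  theta (fun _ => a) b.

Section TwoAssociative.

Variables (n : nat) (A : Type) (theta : ('I_n -> A) -> A -> A).
Variables (alpha : 'I_n -> A -> A -> A) (e : A).
Hypothesis alpha_diag : forall i a, alpha i a a = e.
Hypothesis theta_alpha : forall a b, theta (fun i => alpha i a b) b = a.
Hypothesis theta_2assoc : forall (a b : 'I_n -> A) (c : A),
  theta a (theta b c) = theta (fun i => theta a (b i)) c.

Local Notation mul := (diag_mul theta).

Lemma diag_mulA a b c : mul a (mul b c) = mul (mul a b) c.
Proof. by rewrite /diag_mul theta_2assoc. Qed.

Lemma diag_mul1x a : mul e a = a.
Proof.
rewrite -{2}(theta_alpha a a); congr theta.
by apply: functional_extensionality => i; rewrite alpha_diag.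
Qed.

Lemma theta_diag_mul a c : theta a c = mul (theta a e) c.
Proof. by rewrite /diag_mul -theta_2assoc -/(mul e c) diag_mul1x. Qed.

Definition diag_inv b := theta (fun i => alpha i e b) e.

Lemma diag_mulVx b : mul (diag_inv b) b = e.
Proof. by rewrite -theta_diag_mul theta_alpha. Qed.

End TwoAssociative.

Theorem proposition4p3 (n : nat) (hn : (0 < n)%N) (A : Type)
  (theta : ('I_n -> A) -> A -> A) (alpha : 'I_n -> A -> A -> A) (e : A)
  (Halpha_diag : forall (i : 'I_n) (a : A), alpha i a a = e)
  (Htheta_alpha : forall a b : A, theta (fun i => alpha i a b) b = a)
  (H2assoc : forall (a b : 'I_n -> A) (c : A),
      theta a (theta b c) = theta (fun i => theta a (b i)) c) :
  let mul := fun a b : A => theta (fun _ => a) b in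
  is_group mul /\
  forall b : A,
    is_inverse mul b
      (theta (fun i => alpha i e (theta (fun _ => b) b)) b).
Proof.
move=> mul.
have mulA := diag_mulA H2assoc.
have mul1x := diag_mul1x Halpha_diag Htheta_alpha.
have mulVx := diag_mulVx Halpha_diag Htheta_alpha H2assoc.
split; first exact: left_group_is_group mulA mul1x mulVx.
move=> b; apply: (left_inverse_is_inverse mulA mul1x mulVx).
rewrite (theta_diag_mul Halpha_diag Htheta_alpha H2assoc).
by rewrite -mulA mulVx.
Qed.
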